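(* Under Assumptions 1 and 2, for the accurate-gradient algorithm and every $t\in\{1,\dots,T\}$, $$-\eta_t\sum_{i=1}^n\big(g_i^t(x_i(t))\big)^Ty_i(t)\le\frac12\sum_{i=1}^n\big(\|y_i(t)\|^2-\|y_i(t+1)\|^2\big)+\eta_t^2(n\kappa_2^2+n^2\kappa_2^2)+\frac92\sum_{i=1}^n\|y_i(t)-\bar y(t)\|^2+2\eta_t(\kappa_2+\sqrt n\kappa_2)\sum_{i=1}^n\|y_i(t)-\bar y(t)\|,$$ where $\bar y(t)=\frac1n\sum_iy_i(t)$.
   Context: Network: Let $n\ge2$, $\mathcal V=\{1,\dots,n\}$. For $t=0,1,2,\dots$, $\mathcal G(t)=(\mathcal V,\mathcal E(t),A(t))$ is a digraph with weight matrix $A(t)=(a_{ij}(t))_{n\times n}$, where for some $\gamma>0$, $\gamma\le a_{ij}(t)\le1$ if $(j,i)\in\mathcal E(t)$ and $a_{ij}(t)=0$ otherwise; $\mathcal N_i(t)=\{j:(j,i)\in\mathcal E(t)\}$ and $i\in\mathcal N_i(t)$. Assumption 1: there is an integer $U>0$ such that for every $t\ge0$ the digraph $(\mathcal V,\bigcup_{k=tU}^{(t+1)U-1}\mathcal E(k))$ is strongly connected, and $A(t)1_n=A(t)^T1_n=1_n$ for all $t$. Problem: $\Omega\subset\mathbb R^m$ is convex; for each $i\in\mathcal V$ and $t\ge0$, $f_i^t:\Omega\times\Omega\to\mathbb R$ and $g_i^t=(g_{i1}^t,\dots,g_{ih}^t)^T:\Omega\to\mathbb R^h$; $\mathcal X^t=\{x\in\Omega:\sum_ig_i^t(x)\le0\}$;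 $\nabla_2$ is the gradient in the second argument; $\nabla g_i^t(x)=[\nabla g_{i1}^t(x),\dots,\nabla g_{ih}^t(x)]\in\mathbb R^{m\times h}$. Assumption 2: (i) $f_i^t(x,\cdot)$ convex, each $g_{ik}^t$ convex (differentiable); (ii) $\mathcal X^t\neq\emptyset$, $\Omega$ compact with $\|x\|\le\kappa$ on $\Omega$; (iii) $\|\nabla_2f_i^t(x,y)\|\le\kappa_1$, $\|g_i^t(x)\|\le\kappa_2$, $\|\nabla g_{ik}^t(x)\|\le\kappa_3$ on $\Omega$. Algorithm: $\phi:\mathbb R^m\to\mathbb R$ differentiable and $\mu$-strongly convex, $\mathcal D_\phi(x,y)=\phi(x)-\phi(y)-\langle\nabla\phi(y),x-y\rangle$. Non-increasing step sizes $\zeta_t,\eta_t\in(0,1]$ with $\zeta_t\le\eta_t$; $x_i(0)\in\Omega$, $y_i(0)=0\in\mathbb R^h$; for $t\ge0$: $z_i(t)=\sum_{j\in\mathcal N_i(t)}a_{ij}(t)x_j(t)$; $x_i(t+1)=\arg\min_{x\in\Omega}\{\mathcal D_\phi(x,z_i(t))+\langle\zeta_t\nabla_2f_i^t(x_i(t),x_i(t))+\eta_t\nabla g_i^t(x_i(t))y_i(t),x\rangle\}$; $y_i(t+1)=[(1-\eta_t)\sum_{j\in\mathcal N_i(t)}a_{ij}(t)y_j(t)+\eta_tg_i^t(x_i(t))]_+$. $T$ is the time horizon. *)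

From HB Require Import structures.
From mathcomp Require Import all_boot all_order all_algebra.
From mathcomp Require Import all_classical all_reals all_analysis.
Set Implicit Arguments. Unset Strict Implicit. Unset Printing Implicit Defensive.
Import Order.TTheory GRing.Theory Num.Theory.
Import numFieldNormedType.Exports.
Local Open Scope classical_set_scope.
Local Open Scope ring_scope.

Section Defs.
Variable R : realType.

Definition dotv {k} (u v : 'cV[R]_k) : R := \sum_(l < k) u l 0 * v l 0.
Definition enorm {k} (u : 'cV[R]_k) : R := Num.sqrt (dotv u u).

Definition pospart {k} (u : 'cV[R]_k) : 'cV[R]_k :=
  \col_(l < k) Num.max (u l 0) 0.

Definition nonpos_vec {k} (u : 'cV[R]_k) : Prop := forall l, u l 0 <= 0.

Definition convex_on {m} (Om : set 'cV[R]_m) (F : 'cV[R]_m -> R) : Prop :=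
  forall x y (l : R), Om x -> Om y -> 0 <= l <= 1 ->
    F (l *: x + (1 - l) *: y) <= l * F x + (1 - l) * F y.

Definition gradient_on {m} (Om : set 'cV[R]_m) (F : 'cV[R]_m -> R^o)
    (G : 'cV[R]_m -> 'cV[R]_m) : Prop :=
  forall x, Om x -> differentiable F x /\ forall v, 'D_v F x = dotv (G x) v.

Definition strongly_convex {m} (mu : R) (phi : 'cV[R]_m -> R^o)
    (Gphi : 'cV[R]_m -> 'cV[R]_m) : Prop :=
  0 < mu /\ gradient_on setT phi Gphi /\
  forall x y, phi x >= phi y + dotv (Gphi y) (x - y) + mu / 2 * enorm (x - y) ^+ 2.

Definition bregman {m} (phi : 'cV[R]_m -> R) (Gphi : 'cV[R]_m -> 'cV[R]_m)
    (x y : 'cV[R]_m) : R := phi x - phi y - dotv (Gphi y) (x - y).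

(* time-varying network: E t j i <-> (j,i) in E(t); weights a t i j = a_ij(t) *)
Definition union_graph {n} (E : nat -> rel 'I_n) (U t : nat) : rel 'I_n :=
  fun j i => [exists k : 'I_U, E (t * U + k)%N j i].

Definition network_assumptions {n} (gam : R) (U : nat) (E : nat -> rel 'I_n)
    (a : nat -> 'I_n -> 'I_n -> R) : Prop :=
  0 < gam /\
  (forall t i j, E t j i -> gam <= a t i j <= 1) /\
  (forall t i j, ~~ E t j i -> a t i j = 0) /\
  (forall t i, E t i i) /\
  (* Assumption 1 *)
  (0 < U)%N /\
  (forall t i j, connect (union_graph E U t) i j) /\
  (forall t i, \sum_(j < n) a t i j = 1) /\
  (forall t j, \sum_(i < n) a t i j = 1).

Definition avg {n h} (y : 'I_n -> 'cV[R]_h) : 'cV[R]_h :=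
  n%:R^-1 *: \sum_(i < n) y i.

End Defs.

(* Only the dual update matters; the primal iterates enter only through [Om (x i t)].
   Write [w_i] for the mixed dual vector [sum_j a_ij y_j].  As [[.]_+] does not increase
   norms, expanding [|(1 - eta) w_i + eta g_i|^2] bounds [- eta <g_i, w_i>] by
   [(|w_i|^2 - |y_i(t+1)|^2) / 2 + eta^2 |g_i|^2], and mixing with a doubly stochastic
   matrix does not increase [sum_i |y_i|^2] (Jensen).  The rest, [- eta <g_i, y_i - w_i>],
   is bounded by Cauchy-Schwarz: mixing does not increase [sum_i |y_i - ybar|] either, so
   [sum_i |y_i - w_i| <= 2 sum_i |y_i - ybar|].  The bound obtained this way is stronger
   than the stated one, whose extra terms are nonnegative. *)
From HB Require Import structures.
From mathcomp Require Import all_boot all_order all_algebra.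
From mathcomp Require Import all_classical all_reals all_analysis.
From mathcomp Require Import ring lra.
Import Order.TTheory GRing.Theory Num.Theory.
Import numFieldNormedType.Exports.
Local Open Scope classical_set_scope.
Local Open Scope ring_scope.

Section Euclidean.
Context {R : realType} {k : nat}.
Implicit Types u v w : 'cV[R]_k.

Lemma dotvC u v : dotv u v = dotv v u.
Proof. by apply: eq_bigr => l _; rewrite mulrC. Qed.

Lemma dotvDr u v w : dotv u (v + w) = dotv u v + dotv u w.
Proof. by rewrite /dotv -big_split; apply: eq_bigr => l _; rewrite mxE mulrDr. Qed.

Lemma dotvZr (c : R) u v : dotv u (c *: v) = c * dotv u v.
Proof. by rewrite /dotv mulr_sumr; apply: eq_bigr => l _; rewrite mxE mulrCA. Qed.

Lemma dotvBr u v w : dotv u (v - w) = dotv u v - dotv u w.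
Proof. by rewrite dotvDr -scaleN1r dotvZr mulN1r. Qed.

Lemma dotvDl u v w : dotv (u + v) w = dotv u w + dotv v w.
Proof. by rewrite dotvC dotvDr !(dotvC w). Qed.

Lemma dotvZl (c : R) u v : dotv (c *: u) v = c * dotv u v.
Proof. by rewrite dotvC dotvZr dotvC. Qed.

Lemma dotv_comb (c d : R) u v :
  dotv (c *: u + d *: v) (c *: u + d *: v) =
  c ^+ 2 * dotv u u + 2 * c * d * dotv u v + d ^+ 2 * dotv v v.
Proof. rewrite !(dotvDl, dotvDr, dotvZl, dotvZr) (dotvC v u); ring. Qed.

Lemma dotv_ge0 u : 0 <= dotv u u.
Proof. by apply: sumr_ge0 => l _; rewrite -expr2 sqr_ge0. Qed.

Lemma dotv_self_eq0 u v : dotv u u = 0 -> dotv u v = 0.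
Proof.
move=> /eqP; rewrite psumr_eq0 => [/allP u0|l _]; last by rewrite -expr2 sqr_ge0.
apply: big1 => l _.
by move: (u0 l (mem_index_enum l)); rewrite /= mulf_eq0 orbb => /eqP ->; rewrite mul0r.
Qed.

Lemma dotv_sqr_le u v : dotv u v ^+ 2 <= dotv u u * dotv v v.
Proof.
have [v0|v_neq0] := eqVneq (dotv v v) 0.
  by rewrite dotvC (dotv_self_eq0 _ _ v0) v0 expr0n mulr0.
have v_gt0 : 0 < dotv v v by rewrite lt0r v_neq0 dotv_ge0.
have := dotv_ge0 (dotv v v *: u + (- dotv u v) *: v).
rewrite dotv_comb.
have -> : dotv v v ^+ 2 * dotv u u + 2 * dotv v v * - dotv u v * dotv u v
          + (- dotv u v) ^+ 2 * dotv v v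
        = dotv v v * (dotv u u * dotv v v - dotv u v ^+ 2) by ring.
by rewrite pmulr_rge0 // subr_ge0.
Qed.

Lemma enorm_ge0 u : 0 <= enorm u.
Proof. exact: sqrtr_ge0. Qed.

Lemma enorm_sqr u : enorm u ^+ 2 = dotv u u.
Proof. by rewrite sqr_sqrtr // dotv_ge0. Qed.

Lemma cauchy_schwarz u v : `|dotv u v| <= enorm u * enorm v.
Proof.
by rewrite /enorm -sqrtrM ?dotv_ge0 // -sqrtr_sqr ler_sqrt ?dotv_sqr_le
  // mulr_ge0 ?dotv_ge0.
Qed.

Lemma enormZ (c : R) u : enorm (c *: u) = `|c| * enorm u.
Proof.
by rewrite /enorm dotvZl dotvZr mulrA -expr2 sqrtrM ?sqr_ge0 // sqrtr_sqr.
Qed.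

Lemma enormD u v : enorm (u + v) <= enorm u + enorm v.
Proof.
rewrite -(ler_pXn2r (n := 2)) ?nnegrE ?addr_ge0 ?enorm_ge0 //.
rewrite enorm_sqr -[u]scale1r -[v]scale1r dotv_comb !scale1r sqrrD !enorm_sqr.
have /ler_normlP[_] := cauchy_schwarz u v; lra.
Qed.

Lemma enormB u v : enorm (u - v) <= enorm u + enorm v.
Proof. by have := enormD u ((-1) *: v); rewrite enormZ normrN1 mul1r scaleN1r. Qed.

Lemma enorm_sum_le (I : finType) (F : I -> 'cV[R]_k) :
  enorm (\sum_(j : I) F j) <= \sum_(j : I) enorm (F j).
Proof.
apply: (big_ind2 (fun v r => enorm v <= r)) => //.
- by rewrite /enorm /dotv big1 ?sqrtr0 // => l _; rewrite mxE mul0r.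
- by move=> v1 r1 v2 r2 h1 h2; apply: le_trans (enormD _ _) (lerD h1 h2).
Qed.

Lemma enorm_wsum_le (I : finType) (c : I -> R) (F : I -> 'cV[R]_k) :
  (forall j, 0 <= c j) ->
  enorm (\sum_(j : I) c j *: F j) <= \sum_(j : I) c j * enorm (F j).
Proof.
move=> c_ge0; apply: le_trans (enorm_sum_le _ _) _.
by apply: ler_sum => j _; rewrite enormZ ger0_norm.
Qed.

Lemma pospart_enorm_le u : enorm (pospart u) ^+ 2 <= enorm u ^+ 2.
Proof.
rewrite !enorm_sqr; apply: ler_sum => l _; rewrite !mxE -!expr2.
by case: (leP (u l 0) 0) => // _; rewrite expr0n sqr_ge0.
Qed.

Lemma dual_step_le (eta : R) u w g : 0 <= eta <= 1 ->
  - eta * dotv g u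
  <= 1 / 2 * (enorm w ^+ 2 - enorm (pospart ((1 - eta) *: w + eta *: g)) ^+ 2)
     + eta ^+ 2 * enorm g ^+ 2 + eta * (enorm g * enorm (u - w)).
Proof.
move=> /andP[eta_ge0 eta_le1].
have := pospart_enorm_le ((1 - eta) *: w + eta *: g).
rewrite [X in _ <= X]enorm_sqr dotv_comb -!enorm_sqr (dotvC w g) => proj_le.
have cross : 0 <= enorm g ^+ 2 + 2 * dotv g w + enorm w ^+ 2.
  by have := dotv_ge0 (1 *: g + 1 *: w); rewrite dotv_comb !enorm_sqr; lra.
have /ler_normlP[cs _] := cauchy_schwarz g (u - w).
rewrite dotvBr in cs.
have eta_cs : 0 <= eta * (enorm g * enorm (u - w) + dotv g u - dotv g w).
  by apply: mulr_ge0 => //; lra.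
have eta_cross : 0 <= eta ^+ 2 * (enorm g ^+ 2 + 2 * dotv g w + enorm w ^+ 2).
  by rewrite mulr_ge0 ?sqr_ge0.
have eta_w : 0 <= eta * (1 - eta) * enorm w ^+ 2.
  by rewrite !mulr_ge0 ?subr_ge0 ?enorm_ge0.
nra.
Qed.

End Euclidean.

Lemma weighted_sqr_mean_le {R : realType} (I : finType) (c r : I -> R) :
  (forall j, 0 <= c j) -> \sum_j c j = 1 ->
  (\sum_j c j * r j) ^+ 2 <= \sum_j c j * r j ^+ 2.
Proof.
move=> c_ge0 c_sum1; set m := \sum_j c j * r j.
have : 0 <= \sum_j c j * (r j - m) ^+ 2.
  by apply: sumr_ge0 => j _; rewrite mulr_ge0 ?sqr_ge0.
have -> : \sum_j c j * (r j - m) ^+ 2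
          = \sum_j (c j * r j ^+ 2 - 2 * m * (c j * r j) + m ^+ 2 * c j).
  by apply: eq_bigr => j _; ring.
rewrite big_split sumrB /= -!mulr_sumr -/m c_sum1; lra.
Qed.

Section DoublyStochasticMixing.
Context {R : realType} {n h : nat} {a : 'I_n -> 'I_n -> R}.
Hypothesis a_ge0 : forall i j, 0 <= a i j.
Hypothesis a_row_sum1 : forall i, \sum_j a i j = 1.
Hypothesis a_col_sum1 : forall j, \sum_i a i j = 1.
Implicit Types y g : 'I_n -> 'cV[R]_h.

Lemma sum_mixE (r : 'I_n -> R) : \sum_i \sum_j a i j * r j = \sum_j r j.
Proof.
by rewrite exchange_big; apply: eq_bigr => j _; rewrite -mulr_suml a_col_sum1 mul1r.
Qed.

Lemma mix_sqr_enorm_le y :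
  \sum_i enorm (\sum_j a i j *: y j) ^+ 2 <= \sum_i enorm (y i) ^+ 2.
Proof.
rewrite -[leRHS]sum_mixE; apply: ler_sum => i _.
apply: le_trans (weighted_sqr_mean_le _ _ (fun j => enorm (y j)) (a_ge0 i) (a_row_sum1 i)).
rewrite lerXn2r ?nnegrE ?enorm_ge0 ?enorm_wsum_le //.
by apply: sumr_ge0 => j _; rewrite mulr_ge0 ?enorm_ge0.
Qed.

Lemma mix_dev_enorm_le y c :
  \sum_i enorm (\sum_j a i j *: y j - c) <= \sum_i enorm (y i - c).
Proof.
rewrite -[leRHS]sum_mixE; apply: ler_sum => i _.
have -> : \sum_j a i j *: y j - c = \sum_j a i j *: (y j - c).
  by rewrite (eq_bigr _ (fun j _ => scalerBr _ _ _)) sumrB -scaler_suml a_row_sum1 scale1r.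
exact: enorm_wsum_le.
Qed.

Lemma dual_update_le (eta kappa : R) y g c :
  0 <= eta <= 1 -> 0 <= kappa -> (forall i, enorm (g i) <= kappa) ->
  - eta * (\sum_i dotv (g i) (y i))
  <= 1 / 2 * (\sum_i (enorm (y i) ^+ 2
        - enorm (pospart ((1 - eta) *: (\sum_j a i j *: y j) + eta *: g i)) ^+ 2))
     + eta ^+ 2 * (n%:R * kappa ^+ 2) + 2 * eta * kappa * (\sum_i enorm (y i - c)).
Proof.
move=> eta01 kappa_ge0 g_le; have /andP[eta_ge0 _] := eta01.
pose w i := \sum_j a i j *: y j.
have step_sum : - eta * (\sum_i dotv (g i) (y i))
    <= 1 / 2 * (\sum_i (enorm (w i) ^+ 2
          - enorm (pospart ((1 - eta) *: w i + eta *: g i)) ^+ 2))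
       + eta ^+ 2 * \sum_i enorm (g i) ^+ 2
       + eta * \sum_i enorm (g i) * enorm (y i - w i).
  rewrite !mulr_sumr -!big_split; apply: ler_sum => i _.
  exact: dual_step_le.
have g_sqr_le : \sum_i enorm (g i) ^+ 2 <= n%:R * kappa ^+ 2.
  apply: le_trans (_ : \sum_(i < n) kappa ^+ 2 <= _).
    by apply: ler_sum => i _; rewrite lerXn2r ?nnegrE ?enorm_ge0.
  by rewrite sumr_const card_ord mulr_natl.
have dev_le : \sum_i enorm (g i) * enorm (y i - w i)
              <= 2 * kappa * \sum_i enorm (y i - c).
  apply: le_trans (_ : \sum_i kappa * (enorm (y i - c) + enorm (w i - c)) <= _).
    apply: ler_sum => i _; apply: ler_pM; rewrite ?enorm_ge0 ?g_le //.
    have -> : y i - w i = (y i - c) - (w i - c) by rewrite opprB addrA subrK.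
    exact: enormB.
  rewrite -mulr_sumr big_split /=.
  by have := ler_wpM2l kappa_ge0 (mix_dev_enorm_le y c); rewrite /w; lra.
have := mix_sqr_enorm_le y.
have := ler_wpM2l (sqr_ge0 eta) g_sqr_le.
have := ler_wpM2l eta_ge0 dev_le.
rewrite !sumrB /w in step_sum *; lra.
Qed.

End DoublyStochasticMixing.

Theorem lemma6 (R : realType) (n m h : nat) (n_ge2 : (2 <= n)%N)
  (* network *)
  (gam : R) (U : nat) (E : nat -> rel 'I_n) (a : nat -> 'I_n -> 'I_n -> R)
  (Hnet : network_assumptions gam U E a)
  (* problem data *)
  (Om : set 'cV[R]_m)
  (f : nat -> 'I_n -> 'cV[R]_m -> 'cV[R]_m -> R^o)
  (Gf : nat -> 'I_n -> 'cV[R]_m -> 'cV[R]_m -> 'cV[R]_m)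
  (g : nat -> 'I_n -> 'cV[R]_m -> 'cV[R]_h)
  (Gg : nat -> 'I_n -> 'cV[R]_m -> 'M[R]_(m, h))
  (kap kap1 kap2 kap3 : R)
  (HOm_convex : convex_set Om)
  (* Assumption 2 (i) *)
  (Hf_convex : forall t i x, Om x -> convex_on Om (f t i x))
  (Hf_grad : forall t i x, Om x -> gradient_on Om (f t i x) (Gf t i x))
  (Hg_convex : forall t i (k : 'I_h), convex_on Om (fun z => g t i z k 0))
  (Hg_grad : forall t i (k : 'I_h),
      gradient_on Om (fun z => (g t i z k 0 : R^o)) (fun z => col k (Gg t i z)))
  (* Assumption 2 (ii) *)
  (HX_nonempty : forall t, exists x, Om x /\ nonpos_vec (\sum_(i < n) g t i x))
  (HOm_compact : compact Om)
  (HOm_bound : forall x, Om x -> enorm x <= kap)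
  (* Assumption 2 (iii) *)
  (Hkap1 : forall t i x y, Om x -> Om y -> enorm (Gf t i x y) <= kap1)
  (Hkap2 : forall t i x, Om x -> enorm (g t i x) <= kap2)
  (Hkap3 : forall t i (k : 'I_h) x, Om x -> enorm (col k (Gg t i x)) <= kap3)
  (* mirror map *)
  (mu : R) (phi : 'cV[R]_m -> R^o) (Gphi : 'cV[R]_m -> 'cV[R]_m)
  (Hphi : strongly_convex mu phi Gphi)
  (* step sizes *)
  (zeta eta : nat -> R)
  (Hzeta : forall t, 0 < zeta t <= 1) (Heta : forall t, 0 < eta t <= 1)
  (Hzeta_noninc : forall t, zeta t.+1 <= zeta t)
  (Heta_noninc : forall t, eta t.+1 <= eta t)
  (Hzeta_eta : forall t, zeta t <= eta t)
  (* the algorithm's iterates *)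
  (x : 'I_n -> nat -> 'cV[R]_m) (y : 'I_n -> nat -> 'cV[R]_h)
  (Hx0 : forall i, Om (x i 0%N)) (Hy0 : forall i, y i 0%N = 0)
  (Hx_step : forall i t,
      let z := \sum_(j < n) a t i j *: x j t in
      let obj := fun w => bregman phi Gphi w z
        + dotv (zeta t *: Gf t i (x i t) (x i t) + eta t *: (Gg t i (x i t) *m y i t)) w in
      Om (x i t.+1) /\ forall w, Om w -> obj (x i t.+1) <= obj w)
  (Hy_step : forall i t,
      y i t.+1 = pospart ((1 - eta t) *: (\sum_(j < n) a t i j *: y j t)
                          + eta t *: g t i (x i t)))
  (T t : nat) (Ht : (1 <= t <= T)%N) :
  let ybar := avg (fun i => y i t) in
  - eta t * (\sum_(i < n) dotv (g t i (x i t)) (y i t))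
  <= 1 / 2 * (\sum_(i < n) (enorm (y i t) ^+ 2 - enorm (y i t.+1) ^+ 2))
     + eta t ^+ 2 * (n%:R * kap2 ^+ 2 + n%:R ^+ 2 * kap2 ^+ 2)
     + 9 / 2 * (\sum_(i < n) enorm (y i t - ybar) ^+ 2)
     + 2 * eta t * (kap2 + Num.sqrt n%:R * kap2) * (\sum_(i < n) enorm (y i t - ybar)).
Proof.
cbv zeta; set ybar := avg _.
case: Hnet => gam_gt0 [a_ge_gam [a_off [_ [_ [_ [a_row_sum1 a_col_sum1]]]]]].
have a_ge0 i j : 0 <= a t i j.
  have [/a_ge_gam/andP[+ _]|/a_off->//] := boolP (E t j i).
  exact/le_trans/ltW.
have x_in_Om i : Om (x i t) by case: (t) => [|s]; [exact: Hx0 | case: (Hx_step i s)].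
have kap2_ge0 : 0 <= kap2.
  exact: le_trans (enorm_ge0 _) (Hkap2 t (Ordinal n_ge2) _ (x_in_Om (Ordinal n_ge2))).
have /andP[eta_gt0 eta_le1] := Heta t.
have eta01 : 0 <= eta t <= 1 by rewrite ltW.
under [X in 1 / 2 * X]eq_bigr => i _ do rewrite Hy_step.
have := dual_update_le a_ge0 (a_row_sum1 t) (a_col_sum1 t) _ _ (y^~ t) _ ybar
  eta01 kap2_ge0 (fun i => Hkap2 t i _ (x_in_Om i)).
have dev_ge0 : 0 <= \sum_i enorm (y i t - ybar) by apply: sumr_ge0 => i _; apply: enorm_ge0.
have dev_sqr_ge0 : 0 <= \sum_i enorm (y i t - ybar) ^+ 2 by apply: sumr_ge0 => i _; apply: sqr_ge0.
have sqrt_term_ge0 : 0 <= eta t * Num.sqrt n%:R * kap2 * \sum_i enorm (y i t - ybar).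
  by rewrite !mulr_ge0 ?sqrtr_ge0 // ltW.
have := sqr_ge0 (eta t * n%:R * kap2).
lra.
Qed.
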